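(* Let $G$ be a $6$-regular graph, $\mathcal S$ a canonical path partition of $G$, and $P$ a path component with end-vertices $o_1,o_2$. Let $x_1,x_2\in V_2$ be path neighbors on $P$, with $x_1$ immediately preceding $x_2$ when $P$ is traversed from $o_1$ to $o_2$. Then it is not the case that both $x_1$ goes to $o_2$ and $x_2$ goes to $o_1$.
   Context: All graphs are finite, simple and undirected. A path partition of $G=(V,E)$ is a set of vertex-disjoint paths (single vertices allowed) covering $V$; its members are components. A component with $t\ge3$ vertices is a cycle component if the subgraph induced on its vertex set has a spanning cycle; a one-vertex component is an isolated vertex; every other component is a path component. A path partition is canonical if (1) it has the minimum number of components among all path partitions of $G$; (2) among those, it has the maximum number of cycle components; (3) it has no isolated vertices. Given a canonical path partition $\mathcal S$ of $G$: two vertices are path neighbors if they are consecutive on a path component. An edge of $G$ is a free edge unless it joins two path neighbors or has both endpoints in the same cycle component. $V_1$ is the set of end-vertices of path components together with all vertices of cycle components. $V_2$ is the set of vertices not in $V_1$ that are joined by a free edge to a vertex of $V_1$. A balanced edge is a free edge with one endpoint in $V_1$ and the other in $V_2$; for $x\in V_2$, $y\in V_1$ we say $x$ goes to $y$ if $xy$ is a balanced edge. *)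

From mathcomp Require Import all_boot.
Set Implicit Arguments. Unset Strict Implicit. Unset Printing Implicit Defensive.

Section PathPartitions.
Variables (T : finType) (e : rel T).

Definition simple_graph := symmetric e /\ irreflexive e.

Definition regular (d : nat) := forall v : T, #|[set w | e v w]| = d.

Definition gpath (p : seq T) : bool :=
  if p is x :: q then uniq p && path e x q else false.

(* A path partition: a list of vertex-disjoint paths covering V.
   Its components are the members of the list; their number is size S. *)
Definition path_partition (S : seq (seq T)) : Prop :=
  all gpath S /\ uniq (flatten S) /\ forall x : T, x \in flatten S.

(* Cycle component: >= 3 vertices and the induced subgraph on its vertex set
   has a spanning cycle (some ordering of the vertices is an e-cycle). *)
Definition cycle_comp (p : seq T) : bool :=
  (3 <= size p) && has (cycle e) (permutations p).

Definition isolated_comp (p : seq T) : bool := size p == 1.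

Definition path_comp (p : seq T) : bool :=
  ~~ cycle_comp p && ~~ isolated_comp p.

Definition n_cycle_comps (S : seq (seq T)) : nat := count cycle_comp S.

Definition canonical (S : seq (seq T)) : Prop :=
  [/\ path_partition S,
      (forall S', path_partition S' -> size S <= size S'),
      (forall S', path_partition S' -> size S' = size S ->
                  n_cycle_comps S' <= n_cycle_comps S)
    & all (fun p => ~~ isolated_comp p) S].

Variable S : seq (seq T).

Definition path_nbrs (x y : T) : bool :=
  has (fun p => path_comp p && (infix [:: x; y] p || infix [:: y; x] p)) S.

Definition same_cycle_comp (x y : T) : bool :=
  has (fun p => [&& cycle_comp p, x \in p & y \in p]) S.

Definition free_edge (x y : T) : bool :=
  [&& e x y, ~~ path_nbrs x y & ~~ same_cycle_comp x y].

Definition inV1 (x : T) : bool :=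
  has (fun p => path_comp p && ((ohead p == Some x) || (last x p == x) && (x \in p))) S
  || has (fun p => cycle_comp p && (x \in p)) S.

Definition inV2 (x : T) : bool :=
  ~~ inV1 x && [exists y, inV1 y && free_edge x y].

Definition balanced_edge (x y : T) : bool :=
  free_edge x y && ((inV1 x && inV2 y) || (inV2 x && inV1 y)).

Definition goes_to (x y : T) : bool :=
  [&& inV2 x, inV1 y & balanced_edge x y].

End PathPartitions.

(* If [x1] goes to [o2] and [x2] goes to [o1], the edges [x1 o2] and [x2 o1]
   close [P] into the spanning cycle [o1 .. x1 o2 .. x2 o1] of its vertex set,
   so [P] would be a cycle component.  The only escape is [x1 = o1], which is
   excluded because [o1] is an end-vertex, hence in [V1], while [x1] is in
   [V2]. *)
From mathcomp Require Import all_boot.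

Set Implicit Arguments.
Unset Strict Implicit.
Unset Printing Implicit Defensive.

Lemma path_crossing_cycle (T : Type) (e : rel T) (a x y : T) (A B : seq T) :
  symmetric e -> path e a (A ++ x :: y :: B) ->
  e x (last y B) -> e y a -> cycle e (a :: A ++ x :: rev (y :: B)).
Proof.
move=> esym; rewrite cat_path => /and4P [pA eAx _ pyB] exz eya.
rewrite /= rcons_cat cat_path pA /= eAx rcons_path.
have lastrev : last x (rev (y :: B)) = y by rewrite rev_cons last_rcons.
rewrite lastrev eya andbT (lastI y B) rev_rcons /= exz /=.
by rewrite rev_path (@eq_path _ _ e) // => u v; rewrite esym.
Qed.

Section PathPartitions.
Variables (T : finType) (e : rel T) (S : seq (seq T)).

Lemma cycle_comp_perm (p c : seq T) :
  3 <= size p -> perm_eq c p -> cycle e c -> cycle_comp e p.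
Proof.
move=> p3 cp ec; rewrite /cycle_comp p3; apply/hasP.
by exists c; rewrite ?mem_permutations.
Qed.

Lemma head_path_comp_inV1 (p : seq T) (x : T) :
  p \in S -> path_comp e p -> ohead p = Some x -> inV1 e S x.
Proof.
move=> pS pc hp; apply/orP; left; apply/hasP; exists p => //.
by rewrite pc hp eqxx.
Qed.

Lemma goes_to_edge (x y : T) : goes_to e S x y -> e x y.
Proof. by case/and3P=> _ _ /andP [/and3P []]. Qed.

End PathPartitions.

Theorem mainTheorem5 (T : finType) (e : rel T) (S : seq (seq T))
    (P : seq T) (o1 o2 x1 x2 : T) :
  simple_graph e -> regular e 6 ->
  canonical e S ->
  P \in S -> path_comp e P ->
  ohead P = Some o1 -> last o1 P = o2 ->
  inV2 e S x1 -> inV2 e S x2 ->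
  infix [:: x1; x2] P ->
  ~ (goes_to e S x1 o2 && goes_to e S x2 o1).
Proof.
move=> [esym _] _ [[allg _] _ _ _] PS Pc hP lP /andP [x1V1 _] _ /infixP [A [B defP]].
case/andP=> /goes_to_edge e12 /goes_to_edge e21.
case: A defP => [|a A] defP.
  by case/negP: x1V1; apply: head_path_comp_inV1 PS Pc _; rewrite defP.
move: hP lP; rewrite defP /= last_cat /= => -[ha] lP; subst a.
have gP : gpath e P by move/allP: allg; apply.
move: Pc gP; rewrite defP /path_comp => /andP [/negP notcyc _] /andP [_ pP].
apply: notcyc; apply: (cycle_comp_perm (c := o1 :: A ++ x1 :: rev (x2 :: B))).
- by rewrite /= size_cat /= !addnS.
- by rewrite perm_cons perm_cat2l perm_cons perm_rev.
- by apply: path_crossing_cycle; rewrite // lP.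
Qed.
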